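(* $C_{\mathbb Z}=C^0_{\mathbb Z}=3$.
   Context: $\mathbb Z$ is regarded as the infinite path graph with vertex set $\mathbb Z$ and edges $\{j,j+1\}$, $j\in\mathbb Z$, with the graph distance $d(i,j)=|i-j|$. A measure $\mu$ is a weight function $\mu:\mathbb Z\to(0,\infty)$, with $\mu(A)=\sum_{v\in A}\mu(v)$. Closed balls are $B(x,r)=\{y:d(x,y)\le r\}$. The doubling constant of $\mu$ is $C_\mu=\sup\{\mu(B(x,2k+1))/\mu(B(x,k)): x\in \mathbb Z,\ k\in\{0,1,2,\dots\}\}$, and $\mu$ is doubling if $C_\mu<\infty$. $C_{\mathbb Z}=\inf\{C_\mu:\mu\text{ doubling}\}$; $C^0_\mu=\sup_{x}\mu(B(x,1))/\mu(x)$ and $C^0_{\mathbb Z}=\inf_\mu C^0_\mu$, the infimum over doubling measures. *)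

From mathcomp Require Import all_boot all_order all_algebra.
From mathcomp Require Import all_classical all_reals ereal.
Set Implicit Arguments. Unset Strict Implicit. Unset Printing Implicit Defensive.
Import Order.TTheory GRing.Theory Num.Theory.
Local Open Scope classical_set_scope.
Local Open Scope ring_scope.

(* The path graph Z has vertex set int; a measure is mu : int -> R with
   mu v > 0.  The closed ball B(x,r) = {y : |x - y| <= r} = {x-r,...,x+r},
   so mu(B(x,r)) = sum_{i=0}^{2r} mu(x - r + i). *)
Definition is_measure (R : realType) (mu : int -> R) : Prop :=
  forall v, 0 < mu v.

Definition muB (R : realType) (mu : int -> R) (x : int) (r : nat) : R :=
  \sum_(i < (2 * r).+1) mu (x - r%:Z + (i : nat)%:Z).

Definition Cmu (R : realType) (mu : int -> R) : \bar R :=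
  ereal_sup (range (fun p : int * nat =>
    (muB mu p.1 (2 * p.2).+1 / muB mu p.1 p.2)%:E)).

Definition doubling (R : realType) (mu : int -> R) : Prop :=
  is_measure mu /\ (Cmu mu < +oo)%E.

Definition CZ (R : realType) : \bar R :=
  ereal_inf [set Cmu mu | mu in [set mu : int -> R | doubling mu]].

Definition C0mu (R : realType) (mu : int -> R) : \bar R :=
  ereal_sup (range (fun x : int => (muB mu x 1 / mu x)%:E)).

Definition C0Z (R : realType) : \bar R :=
  ereal_inf [set C0mu mu | mu in [set mu : int -> R | doubling mu]].

(* A ball of radius 1 already forces 3 <= C^0_mu <= C_mu: if
   mu(x-1) + mu(x) + mu(x+1) <= c mu(x) everywhere with c < 3, then mu is
   strictly concave on Z, and a positive concave function on a half-line
   cannot decrease, so mu(0) <= mu(1) and mu(0) <= mu(-1), whence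
   mu(B(0,1)) >= 3 mu(0) > c mu(0).  The counting measure attains the bound
   for C_mu, since |B(x,2k+1)| = 4k+3 <= 3 (2k+1) = 3 |B(x,k)|. *)
From mathcomp Require Import all_boot all_order all_algebra.
From mathcomp Require Import all_classical all_reals ereal.
From mathcomp Require Import zify lra.
Set Implicit Arguments. Unset Strict Implicit. Unset Printing Implicit Defensive.
Import Order.TTheory GRing.Theory Num.Theory.
Local Open Scope ring_scope.

Section ConcaveSequences.
Variable R : archiRealFieldType.

Lemma concave_pos_seq_nondecr (f : nat -> R) :
  (forall n, 0 < f n) -> (forall n, f n.+2 + f n <= 2 * f n.+1) ->
  f 0%N <= f 1%N.
Proof.
move=> f_gt0 f_concave; rewrite leNgt; apply/negP => f1_lt_f0.
set e := f 0%N - f 1%N.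
have e_gt0 : 0 < e by rewrite /e; lra.
have f_step : forall n, f n.+1 - f n <= - e.
  elim=> [|n IH]; first by rewrite /e; lra.
  by have := f_concave n; lra.
have f_linear : forall n : nat, f n <= f 0%N - n%:R * e.
  elim=> [|n IH]; first by rewrite mul0r subr0.
  by have := f_step n; rewrite -natr1 mulrDl mul1r; lra.
have /archi_boundP : 0 <= f 0%N / e by rewrite divr_ge0 // ltW.
set N := Num.bound _; rewrite ltr_pdivrMr // => f0_lt.
by have := f_linear N; have := f_gt0 N; lra.
Qed.

Lemma three_le_of_ball_sum_le (a : int -> R) (c : R) :
  (forall x, 0 < a x) ->
  (forall x, a (x - 1) + a x + a (x + 1) <= c * a x) -> 3 <= c.
Proof.
move=> a_gt0 a_ball; rewrite leNgt; apply/negP => c_lt3.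
have a_concave x : a (x - 1) + a (x + 1) <= 2 * a x.
  by have := a_ball x; have := a_gt0 x; nra.
have a_right : a 0 <= a 1.
  apply: (@concave_pos_seq_nondecr (fun n : nat => a n%:Z)) => // n.
  have := a_concave n.+1%:Z.
  have -> : n.+1%:Z - 1 = n%:Z by lia.
  have -> : n.+1%:Z + 1 = n.+2%:Z by lia.
  lra.
have a_left : a 0 <= a (- 1).
  apply: (@concave_pos_seq_nondecr (fun n : nat => a (- n%:Z))) => // n.
  have := a_concave (- n.+1%:Z).
  have -> : - n.+1%:Z - 1 = - n.+2%:Z by lia.
  have -> : - n.+1%:Z + 1 = - n%:Z by lia.
  lra.
by have := a_ball 0; have := a_gt0 0; rewrite sub0r add0r; nra.
Qed.

End ConcaveSequences.

Section Balls.
Variables (R : realType) (mu : int -> R).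

Lemma muB0 x : muB mu x 0 = mu x.
Proof. by rewrite /muB big_ord_recl big_ord0 addr0 subr0 addr0. Qed.

Lemma muB1 x : muB mu x 1 = mu (x - 1) + mu x + mu (x + 1).
Proof.
rewrite /muB !big_ord_recl big_ord0 addr0 /= addr0 /bump /= addrA.
have -> : x - 1 + 1 = x by lia.
by have -> : x - 1 + 2%:Z = x + 1 by lia.
Qed.

Lemma C0mu_le_Cmu : (C0mu mu <= Cmu mu)%E.
Proof.
apply: ge_ereal_sup => _ [x _ <-]; apply: ereal_sup_ubound.
by exists (x, 0%N) => //=; rewrite muB0.
Qed.

Lemma three_le_C0mu : is_measure mu -> ((3%:R : R)%:E <= C0mu mu)%E.
Proof.
move=> mu_gt0; rewrite leNgt; apply/negP => C0_lt3.
have C0_ub x : ((muB mu x 1 / mu x)%:E <= C0mu mu)%E.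
  by apply: ereal_sup_ubound; exists x.
move: C0_lt3 C0_ub; case: (C0mu mu) => [c | |] //; last first.
  by move=> _ /(_ 0); rewrite leeNy_eq.
rewrite lte_fin => c_lt3 C0_ub; move: c_lt3; apply/negP; rewrite -leNgt.
apply: (three_le_of_ball_sum_le mu_gt0) => x.
by have := C0_ub x; rewrite lee_fin muB1 ler_pdivrMr.
Qed.

End Balls.

Section CountingMeasure.
Variable R : realType.

Let count_mu : int -> R := fun=> 1.

Lemma muB_count x r : muB count_mu x r = (2 * r).+1%:R.
Proof. by rewrite /muB sumr_const card_ord. Qed.

Lemma Cmu_count : Cmu count_mu = (3%:R : R)%:E.
Proof.
apply: le_anti; rewrite (le_trans _ (C0mu_le_Cmu _)) ?three_le_C0mu // andbT.
apply: ge_ereal_sup => _ [[x k] _ <-] /=.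
by rewrite !muB_count lee_fin ler_pdivrMr ?ltr0n // -natrM ler_nat; lia.
Qed.

Lemma C0mu_count : C0mu count_mu = (3%:R : R)%:E.
Proof.
apply: le_anti; rewrite three_le_C0mu // andbT -Cmu_count.
exact: C0mu_le_Cmu.
Qed.

Lemma doubling_count : doubling count_mu.
Proof. by split=> [v|]; rewrite ?ltr01 // Cmu_count ltry. Qed.

End CountingMeasure.

Lemma ereal_inf_attained (R : realType) (S : set (\bar R)) (x : \bar R) :
  S x -> lbound S x -> ereal_inf S = x.
Proof.
by move=> Sx x_lb; apply/le_anti/andP; split;
  [exact: ereal_inf_lbound | exact: le_ereal_inf_tmp].
Qed.

Theorem theorem4p2 (R : realType) :
  CZ R = (3%:R : R)%:E /\ C0Z R = (3%:R : R)%:E.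
Proof.
split; apply: ereal_inf_attained.
- by exists (fun=> 1); [exact: doubling_count | exact: Cmu_count].
- move=> _ [mu [mu_gt0 _] <-].
  exact: le_trans (three_le_C0mu mu_gt0) (C0mu_le_Cmu mu).
- by exists (fun=> 1); [exact: doubling_count | exact: C0mu_count].
- by move=> _ [mu [mu_gt0 _] <-]; exact: three_le_C0mu.
Qed.
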